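(* Let $\Theta\subset\mathbb{R}^{n_\theta}$ be a box and let $g_1,\dots,g_N:\Theta\to\mathbb{R}$ be unknown constraint functions, modeled as sample paths of mutually independent Gaussian processes; all probabilities below are taken with respect to this Gaussian process model. For each $i\in[N]$ let $c_i:\mathbb{R}_{\ge0}\to\mathbb{R}_{\ge0}$ be a violation function satisfying (A1) $c_i(0)=0$, (A2) $c_i(s_1)\ge c_i(s_2)$ whenever $s_1>s_2\ge0$, (A3) $c_i$ is left continuous on $\mathbb{R}_{\ge0}$, and define the violation cost $\bar c_i(\theta)=c_i([g_i(\theta)]^+)$ with $[x]^+=\max\{x,0\}$. Fix budgets $B_i\ge0$, $i\in[N]$, a horizon $T\in\mathbb{N}$ and $\delta\in(0,1)$, and choose $\epsilon_t\in(0,1)$, $t\in[T]$, such that $\delta=1-\prod_{t=1}^T(1-\epsilon_t)$. Consider the following violation-aware sequential procedure (VABO). Start from a dataset $\mathcal{D}_0$ consisting of the (noise-free) evaluations of the $g_i$ (and of the objective) at the points of a nonempty initial set $\Theta_0\subset\Theta$ on which $g_i\le 0$ for all $i$. For $t=1,2,\dots,T$: let $B_{i,t}=B_i-\sum_{\tau=1}^{t-1}\bar c_i(\theta_\tau)$ be the remaining budgets; choose weights $\beta_{i,t}\in(0,1]$ and a point $\theta_t\in\Theta$, both determined by $\mathcal{D}_{t-1}$, such that $$\prod_{i\in[N]}\Pr\big(\bar c_i(\theta_t)\le \beta_{i,t}B_{i,t}\,\big|\,\mathcal{D}_{t-1}\big)\ \ge\ 1-\epsilon_t$$ (assume such a point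 exists at every iteration; e.g. $\theta_t$ maximizes the constrained expected improvement over the set of such points); evaluate $g_i(\theta_t)$ for all $i$ (and the objective), set $B_{i,t+1}=B_{i,t}-\bar c_i(\theta_t)$ and $\mathcal{D}_t=\mathcal{D}_{t-1}\cup\{(\theta_t,\text{evaluations})\}$; if $B_{i,t+1}<0$ for some $i\in[N]$, terminate. Then $$\Pr\Big(\{\text{all } T \text{ iterations are performed}\}\cap\Big\{\sum_{t=1}^T\bar c_i(\theta_t)\le B_i\ \ \forall i\in[N]\Big\}\Big)\ \ge\ 1-\delta .$$
   Context: $[N]=\{1,\dots,N\}$. The conditional probability $\Pr(\cdot\mid\mathcal{D}_{t-1})$ is the Gaussian process posterior given the data collected up to iteration $t-1$; because the $g_i$ are modeled as independent Gaussian processes, the product of the marginal posterior probabilities over $i$ equals the posterior probability that all $N$ events hold simultaneously. *)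

From HB Require Import structures.
From mathcomp Require Import all_boot all_order all_algebra.
From mathcomp Require Import all_classical all_reals all_analysis.
Set Implicit Arguments. Unset Strict Implicit. Unset Printing Implicit Defensive.
Import Order.TTheory GRing.Theory Num.Theory numFieldTopology.Exports.
Local Open Scope classical_set_scope.
Local Open Scope ring_scope.

Section VABO_defs.
Context {R : realType} {d : measure_display} {Omega : measurableType d}.

Definition box (n : nat) (lo hi : 'I_n -> R) : set 'rV[R]_n :=
  [set x | forall j, lo j <= x ord0 j <= hi j].

Definition gen_sigma (F : set (Omega -> R)) : set (set Omega) :=
  <<s [set E | exists2 X, F X & exists2 B : set R, measurable B & E = X @^-1` B] >>.

(** [h] is (a version of) the conditional probability Pr(A | F) of the event A
    given the sub-sigma-algebra F: h is F-measurable and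
    int_G h dP = P (A /\ G) for every G in F. *)
Definition is_cond_prob (P : probability Omega R) (F : set (set Omega))
    (A : set Omega) (h : Omega -> R) : Prop :=
  (forall B : set R, measurable B -> F (h @^-1` B)) /\
  (forall G, F G -> (\int[P]_(w in G) (h w)%:E = P (A `&` G))%E).

Definition gaussian_rv (P : probability Omega R) (Y : Omega -> R) : Prop :=
  measurable_fun setT Y /\
  exists m : R,
    (forall B : set R, measurable B -> P (Y @^-1` B) = \d_m B) \/
    (exists2 s : R, 0 < s &
       forall B : set R, measurable B -> P (Y @^-1` B) = normal_prob m s B).

Definition gaussian_process (n : nat) (P : probability Omega R)
    (Theta : set 'rV[R]_n) (X : Omega -> 'rV[R]_n -> R) : Prop :=
  forall (s : seq 'rV[R]_n) (a : seq R),
    (forall x, x \in s -> Theta x) ->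
    gaussian_rv P (fun w => \sum_(k < size s) a`_k * X w s`_k).

Definition field_sigma (n : nat) (Theta : set 'rV[R]_n)
    (X : Omega -> 'rV[R]_n -> R) : set (set Omega) :=
  gen_sigma [set Y | exists2 x, Theta x & Y = fun w => X w x].

Definition mutually_independent_fields (n N : nat) (P : probability Omega R)
    (Theta : set 'rV[R]_n) (g : 'I_N -> Omega -> 'rV[R]_n -> R) : Prop :=
  forall E : 'I_N -> set Omega,
    (forall i, field_sigma Theta (g i) (E i)) ->
    P (\bigcap_(i in [set: 'I_N]) E i) = (\prod_(i < N) fine (P (E i)))%:E.

Definition pos_part (x : R) : R := Num.max x 0.

Definition viol_cost (n N : nat) (c : 'I_N -> R -> R)
    (g : 'I_N -> Omega -> 'rV[R]_n -> R) (i : 'I_N) (w : Omega)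
    (x : 'rV[R]_n) : R :=
  c i (pos_part (g i w x)).

Definition rem_budget (n N : nat) (c : 'I_N -> R -> R)
    (g : 'I_N -> Omega -> 'rV[R]_n -> R) (B : 'I_N -> R)
    (theta : nat -> Omega -> 'rV[R]_n) (i : 'I_N) (t : nat) (w : Omega) : R :=
  B i - \sum_(1 <= tau < t) viol_cost c g i w (theta tau w).

Definition data_rvs (n N : nat) (g : 'I_N -> Omega -> 'rV[R]_n -> R)
    (f : Omega -> 'rV[R]_n -> R) (theta0 : seq 'rV[R]_n)
    (theta : nat -> Omega -> 'rV[R]_n) (t : nat) : set (Omega -> R) :=
  [set X |
     (exists i x, x \in theta0 /\ X = fun w => g i w x) \/
     (exists x, x \in theta0 /\ X = fun w => f w x) \/
     (exists tau j, (1 <= tau <= t)%N /\ X = fun w => theta tau w ord0 j) \/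
     (exists i tau, (1 <= tau <= t)%N /\ X = fun w => g i w (theta tau w)) \/
     (exists tau, (1 <= tau <= t)%N /\ X = fun w => f w (theta tau w))].

Definition data_sigma (n N : nat) (g : 'I_N -> Omega -> 'rV[R]_n -> R)
    (f : Omega -> 'rV[R]_n -> R) (theta0 : seq 'rV[R]_n)
    (theta : nat -> Omega -> 'rV[R]_n) (t : nat) : set (set Omega) :=
  gen_sigma (data_rvs g f theta0 theta t).

(** iteration t is performed: the procedure did not terminate after any of
    the iterations 1..t-1, i.e. B_{i,tau+1} >= 0 for all i, 1 <= tau < t. *)
Definition iteration_performed (n N : nat) (c : 'I_N -> R -> R)
    (g : 'I_N -> Omega -> 'rV[R]_n -> R) (B : 'I_N -> R)
    (theta : nat -> Omega -> 'rV[R]_n) (t : nat) : set Omega :=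
  [set w | forall tau, (1 <= tau < t)%N ->
      forall i, 0 <= rem_budget c g B theta i tau.+1 w].

End VABO_defs.

From HB Require Import structures.
From mathcomp Require Import all_boot all_order all_algebra.
From mathcomp Require Import all_classical all_reals all_analysis.
From mathcomp Require Import measurable_realfun zify lra.
Set Implicit Arguments. Unset Strict Implicit. Unset Printing Implicit Defensive.
Import Order.TTheory GRing.Theory Num.Theory numFieldTopology.Exports.
Local Open Scope classical_set_scope.
Local Open Scope ring_scope.

(* Let A_t be the event that in each iteration s <= t every violation cost
   stayed below its share beta_{i,s} B_{i,s} of the remaining budget.  As the
   costs are nonnegative and beta <= 1, on A_t every remaining budget B_{i,s+1}
   is nonnegative: iterations 1..t+1 are performed and, for t = T, the total
   costs respect the budgets.  A_t belongs to the data sigma-algebra F_t and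
   A_{t+1} is A_t intersected with the event whose conditional probability
   given F_t is at least 1 - eps_{t+1} on A_t, so integrating over A_t gives
   P(A_{t+1}) >= (1 - eps_{t+1}) P(A_t); by induction
   P(A_T) >= prod_t (1 - eps_t) = 1 - delta. *)

Section measurable_sets.
Context {R : realType} {d : measure_display} {T : measurableType d}.

Lemma measurable_sum_seq (D : set T) (I : eqType) (s : seq I) (h : I -> T -> R) :
  (forall i, i \in s -> measurable_fun D (h i)) ->
  measurable_fun D (fun x => \sum_(i <- s) h i x).
Proof.
move=> mh; under eq_fun do rewrite big_seq_cond big_mkcond /=.
apply: measurable_sum => i; case: (boolP (i \in s)) => [/mh //|_].
exact: measurable_cst.
Qed.

Lemma measurable_forall_nat (D : set nat) (Q : nat -> set T) :
  (forall s, D s -> measurable (Q s)) ->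
  measurable [set w | forall s, D s -> Q s w].
Proof.
move=> mQ; rewrite (_ : [set w | _] = \bigcap_(s in D) Q s).
  exact: bigcap_measurableType mQ.
by apply/seteqP; split=> w Qw s /Qw.
Qed.

Lemma measurable_forall_fin (I : finType) (Q : I -> set T) :
  (forall i, measurable (Q i)) -> measurable [set w | forall i, Q i w].
Proof.
move=> mQ; rewrite (_ : [set w | _] = \bigcap_(i in [set: I]) Q i).
  by apply: fin_bigcap_measurable => //; exact: finite_finset.
by apply/seteqP; split=> [w Qw i _|w Qw i]; apply: Qw.
Qed.

Lemma measurable_lefun (f g : T -> R) :
  measurable_fun setT f -> measurable_fun setT g ->
  measurable [set x | f x <= g x].
Proof.
by move=> mf mg; rewrite -[X in measurable X]setTI; exact: measurable_fun_le.
Qed.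

End measurable_sets.

Section generated_sigma.
Context {R : realType} {d : measure_display} {Omega : measurableType d}.
Implicit Types (Fam : set (Omega -> R)) (X : Omega -> R).

Definition gen_generators Fam : set (set Omega) :=
  [set E | exists2 X, Fam X & exists2 B : set R, measurable B & E = X @^-1` B].

(* Seeing [gen_sigma Fam] as the measurable sets of a measurable type makes
   the library's measurability lemmas available inside it. *)
Definition gen_sigmaType Fam := g_sigma_algebraType (gen_generators Fam).

Lemma gen_sigmaE Fam : gen_sigma Fam = @measurable _ (gen_sigmaType Fam).
Proof. by []. Qed.

Lemma gen_sigma_mono (F1 F2 : set (Omega -> R)) :
  F1 `<=` F2 -> gen_sigma F1 `<=` gen_sigma F2.
Proof.
move=> F12; apply: sub_smallest2r; first exact: smallest_sigma_algebra.
by move=> E [X /F12 F2X mB]; exists X.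
Qed.

Lemma gen_sigma_sub Fam :
  (forall X, Fam X -> measurable_fun setT X) -> gen_sigma Fam `<=` measurable.
Proof.
move=> mFam; apply: smallest_sub; first exact: sigma_algebra_measurable.
by move=> E [X /mFam mX [B mB ->]]; rewrite -[X @^-1` B]setTI; exact: mX.
Qed.

Lemma gen_sigma_measurableP Fam X :
  measurable_fun [set: gen_sigmaType Fam] X <->
  (forall B, measurable B -> gen_sigma Fam (X @^-1` B)).
Proof.
split=> [mX B mB|mX _ B mB]; last by rewrite setTI; exact: mX.
by have := mX measurableT B mB; rewrite setTI.
Qed.

Lemma gen_sigma_measurable_fun Fam X :
  Fam X -> measurable_fun [set: gen_sigmaType Fam] X.
Proof.
move=> FamX; apply/gen_sigma_measurableP => B mB.
by apply: sub_gen_smallest; exists X => //; exists B.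
Qed.

Lemma measurable_fun_gen_sigma_mono (F1 F2 : set (Omega -> R)) X :
  F1 `<=` F2 -> measurable_fun [set: gen_sigmaType F1] X ->
  measurable_fun [set: gen_sigmaType F2] X.
Proof.
move=> F12 /gen_sigma_measurableP mX; apply/gen_sigma_measurableP => Y mY.
exact: gen_sigma_mono F12 _ (mX Y mY).
Qed.

Lemma measurable_fun_gen_sigma Fam X :
  gen_sigma Fam `<=` measurable -> measurable_fun [set: gen_sigmaType Fam] X ->
  measurable_fun setT X.
Proof.
by move=> Fm /gen_sigma_measurableP mX _ B mB; rewrite setTI; exact: Fm (mX B mB).
Qed.

End generated_sigma.

Section conditional_probability.
Context {R : realType} {d : measure_display} {T : measurableType d}.
Variable P : probability T R.

Lemma is_cond_prob_ge (F : set (set T)) (E A : set T) (h : T -> R) (p : R) :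
  F `<=` measurable -> F A -> is_cond_prob P F E h -> 0 <= p ->
  (forall w, A w -> p <= h w) -> (p%:E * P A <= P (E `&` A))%E.
Proof.
move=> Fm FA [mh hE] p0 ph; have mA := Fm _ FA.
rewrite -hE // -integral_cst //; apply: ge0_le_integral => //.
apply/measurable_EFinP => _ Y mY.
by apply: measurableI => //; exact: Fm (mh _ mY).
Qed.

Lemma prob_ge_prod (A : nat -> set T) (q : nat -> R) t :
  A 0 = setT ->
  (forall s, (s < t)%N ->
     0 <= q s.+1 /\ ((q s.+1)%:E * P (A s) <= P (A s.+1))%E) ->
  ((\prod_(1 <= s < t.+1) q s)%:E <= P (A t))%E.
Proof.
move=> A0; elim: t => [_|t IH step].
  by rewrite big_geq // A0 probability_setT.
have [q0 qA] := step t (ltnSn t).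
rewrite big_nat_recr //= EFinM muleC; apply: le_trans qA.
apply: lee_wpmul2l; first by rewrite lee_fin.
by apply: IH => s st; apply: step; exact: ltnW.
Qed.

End conditional_probability.

Lemma gaussian_process_measurable {R : realType} {d : measure_display}
    {Omega : measurableType d} (n : nat) (P : probability Omega R)
    (Theta : set 'rV[R]_n) (X : Omega -> 'rV[R]_n -> R) x :
  gaussian_process P Theta X -> Theta x -> measurable_fun setT (fun w => X w x).
Proof.
move=> gpX Thx; have [|mX _] := gpX [:: x] [:: 1].
  by move=> y /[!inE] /eqP->.
by move: mX; congr measurable_fun; apply/funext => w; rewrite big_ord1 mul1r.
Qed.

Lemma le_of_le_share (R : realDomainType) (C b r : R) :
  0 <= C -> 0 < b <= 1 -> C <= b * r -> C <= r.
Proof. by move=> C0 /andP[b0 b1] Cbr; nra. Qed.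

Section vabo.
Context {R : realType} {d : measure_display} {Omega : measurableType d}.
Variable P : probability Omega R.
Variables (n N : nat) (g : 'I_N -> Omega -> 'rV[R]_n -> R).
Variables (f : Omega -> 'rV[R]_n -> R) (c : 'I_N -> R -> R) (B : 'I_N -> R).
Variables (theta0 : seq 'rV[R]_n) (theta : nat -> Omega -> 'rV[R]_n).
Variables (beta : 'I_N -> nat -> Omega -> R) (T : nat) (eps : nat -> R).

Local Notation data t := (data_rvs g f theta0 theta t).
Local Notation F := (data_sigma g f theta0 theta).
Local Notation cost i w t := (viol_cost c g i w (theta t w)).
Local Notation rem i t := (rem_budget c g B theta i t).
Local Notation performed := (iteration_performed c g B theta).

Definition step_event (t : nat) : set Omega :=
  [set w | forall i, cost i w t <= beta i t w * rem i t w].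

Lemma step_eventE t : step_event t =
  \bigcap_(i in [set: 'I_N]) [set w | cost i w t <= beta i t w * rem i t w].
Proof. by apply/seteqP; split=> [w Sw i _|w Sw i]; apply: Sw. Qed.

Definition within_budget (t : nat) : set Omega :=
  [set w | forall s, (1 <= s <= t)%N -> step_event s w].

Definition budget_respected : set Omega :=
  [set w | forall i, \sum_(1 <= t < T.+1) cost i w t <= B i].

Hypothesis c_ge0 : forall i s, 0 <= s -> 0 <= c i s.
Hypothesis c_nondecreasing :
  forall i s1 s2, 0 <= s2 -> s2 < s1 -> c i s2 <= c i s1.
Hypothesis beta_range : forall t i w, (1 <= t <= T)%N -> 0 < beta i t w <= 1.

Lemma pos_part_ge0 (x : R) : 0 <= pos_part x.
Proof. by rewrite /pos_part le_max lexx orbT. Qed.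

Lemma viol_cost_ge0 i w x : 0 <= viol_cost c g i w x.
Proof. exact/c_ge0/pos_part_ge0. Qed.

Lemma rem_budgetS i t w : (1 <= t)%N -> rem i t.+1 w = rem i t w - cost i w t.
Proof. by move=> t1; rewrite /rem_budget big_nat_recr //= opprD addrA. Qed.

Lemma within_budgetS t :
  within_budget t.+1 = step_event t.+1 `&` within_budget t.
Proof.
apply/seteqP; split=> [w Ww|w [Sw Ww] s /andP[s1]].
  by split=> [|s /andP[s1 st]]; apply: Ww; rewrite ?leqnn ?s1 ?(leqW st).
by rewrite leq_eqVlt => /orP[/eqP->//|/ltnSE st]; apply: Ww; rewrite s1.
Qed.

Lemma within_budget_performed t :
  (t <= T)%N -> within_budget t `<=` performed t.+1.
Proof.
move=> tT w Ww tau /andP[tau1 taut] i; rewrite rem_budgetS // subr_ge0.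
apply: (le_of_le_share (viol_cost_ge0 _ _ _) (beta_range (t := tau) i w _)).
  lia.
by apply: Ww; lia.
Qed.

Lemma performed_budget_respected :
  (forall i, 0 <= B i) -> performed T.+1 `<=` performed T `&` budget_respected.
Proof.
move=> B0 w Tw; split=> [tau /andP[tau1 tauT]|i]; first by apply: Tw; lia.
have [->|T0] := posnP T; first by rewrite big_geq.
by rewrite -subr_ge0; apply: Tw; lia.
Qed.

Hypothesis g0_measurable :
  forall i x, x \in theta0 -> measurable_fun setT (fun w => g i w x).
Hypothesis f0_measurable :
  forall x, x \in theta0 -> measurable_fun setT (fun w => f w x).
Hypothesis g_iterate_measurable :
  forall t i, measurable_fun setT (fun w => g i w (theta t w)).
Hypothesis f_iterate_measurable :
  forall t, measurable_fun setT (fun w => f w (theta t w)).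
Hypothesis theta_adapted : forall t j, (1 <= t <= T)%N ->
  measurable_fun [set: gen_sigmaType (data t.-1)] (fun w => theta t w ord0 j).
Hypothesis beta_adapted : forall t i, (1 <= t <= T)%N ->
  measurable_fun [set: gen_sigmaType (data t.-1)] (beta i t).

Lemma data_rvs_mono s t : (s <= t)%N -> data s `<=` data t.
Proof.
move=> st X [|[|[[tau [j [tau_s ->]]]|[[i [tau [tau_s ->]]]|[tau [tau_s ->]]]]]].
- by left.
- by right; left.
- by right; right; left; exists tau, j; split=> //; lia.
- by right; right; right; left; exists i, tau; split=> //; lia.
- by right; right; right; right; exists tau; split=> //; lia.
Qed.

Lemma data_sigma_sub t :
  (forall tau j, (1 <= tau <= t)%N ->
     measurable_fun setT (fun w => theta tau w ord0 j)) ->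
  F t `<=` measurable.
Proof.
move=> mtheta; apply: gen_sigma_sub => X [|[|[|[|]]]].
- by move=> [i [x [x0 ->]]]; exact: g0_measurable.
- by move=> [x [x0 ->]]; exact: f0_measurable.
- by move=> [tau [j [tau_t ->]]]; exact: mtheta.
- by move=> [i [tau [_ ->]]]; exact: g_iterate_measurable.
- by move=> [tau [_ ->]]; exact: f_iterate_measurable.
Qed.

Lemma theta_measurable t j :
  (1 <= t <= T)%N -> measurable_fun setT (fun w => theta t w ord0 j).
Proof.
elim/ltn_ind: t j => t IH j tT.
apply: measurable_fun_gen_sigma (theta_adapted j tT).
by apply: data_sigma_sub => tau k tau_t; apply: IH; lia.
Qed.

Lemma data_sigma_measurable t : (t <= T)%N -> F t `<=` measurable.
Proof.
by move=> tT; apply: data_sigma_sub => tau j tau_t; apply: theta_measurable; lia.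
Qed.

Lemma measurable_viol i : measurable_fun setT (fun x => c i (pos_part x)).
Proof.
apply: nondecreasing_measurable => // x y xy.
have : pos_part x <= pos_part y by rewrite /pos_part ge_max !le_max xy lexx !orbT.
by rewrite le_eqVlt => /orP[/eqP->//|]; exact: c_nondecreasing (pos_part_ge0 x).
Qed.

Lemma measurable_cost_data t tau i : (1 <= tau <= t)%N ->
  measurable_fun [set: gen_sigmaType (data t)] (fun w => cost i w tau).
Proof.
move=> tau_t; apply: measurableT_comp (measurable_viol i) _.
by apply: gen_sigma_measurable_fun; right; right; right; left; exists i, tau.
Qed.

Lemma measurable_rem_budget_data t s i : (s <= t.+1)%N ->
  measurable_fun [set: gen_sigmaType (data t)] (rem i s).
Proof.
move=> st; apply: measurable_funB; first exact: measurable_cst.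
by apply: measurable_sum_seq => tau; rewrite mem_index_iota => tau_s;
  apply: measurable_cost_data; lia.
Qed.

Lemma step_event_data t s :
  (1 <= s <= t)%N -> (s <= T)%N -> F t (step_event s).
Proof.
move=> st sT; rewrite /data_sigma gen_sigmaE.
apply: measurable_forall_fin => i; apply: measurable_lefun.
  exact: measurable_cost_data.
apply: measurable_funM; last by apply: measurable_rem_budget_data; lia.
apply: measurable_fun_gen_sigma_mono (data_rvs_mono _) (beta_adapted _ _); lia.
Qed.

Lemma within_budget_data t : (t <= T)%N -> F t (within_budget t).
Proof.
move=> tT; rewrite /data_sigma gen_sigmaE.
by apply: measurable_forall_nat => s st; apply: step_event_data; lia.
Qed.

Lemma performed_data t : F t (performed t).
Proof.
rewrite /data_sigma gen_sigmaE.
apply: measurable_forall_nat => tau taut; apply: measurable_forall_fin => i.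
apply: measurable_lefun; first exact: measurable_cst.
by apply: measurable_rem_budget_data; lia.
Qed.

Lemma budget_respected_data : F T budget_respected.
Proof.
rewrite /data_sigma gen_sigmaE; apply: measurable_forall_fin => i.
apply: measurable_lefun; last exact: measurable_cst.
by apply: measurable_sum_seq => tau; rewrite mem_index_iota => tauT;
  apply: measurable_cost_data; lia.
Qed.

Hypothesis eps_le1 : forall t, (1 <= t <= T)%N -> eps t <= 1.
Hypothesis step_cond_prob : forall t, (1 <= t <= T)%N ->
  exists2 h : Omega -> R, is_cond_prob P (F t.-1) (step_event t) h &
    forall w, performed t w -> 1 - eps t <= h w.

Lemma within_budget_prob :
  ((\prod_(1 <= t < T.+1) (1 - eps t))%:E <= P (within_budget T))%E.
Proof.
apply: prob_ge_prod => [|s sT].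
  by apply/seteqP; split=> // w _ s; lia.
have s1T : (1 <= s.+1 <= T)%N by lia.
have [h hcond hbound] := step_cond_prob s1T.
have eps_s : 0 <= 1 - eps s.+1 by rewrite subr_ge0 eps_le1.
split=> //; rewrite within_budgetS; apply: is_cond_prob_ge hcond eps_s _.
- exact: data_sigma_measurable (ltnW sT).
- exact: within_budget_data (ltnW sT).
- by move=> w /(within_budget_performed (ltnW sT)); exact: hbound.
Qed.

Theorem vabo_budget_prob : (forall i, 0 <= B i) ->
  ((\prod_(1 <= t < T.+1) (1 - eps t))%:E <=
     P (performed T `&` budget_respected))%E.
Proof.
move=> B0; apply: le_trans within_budget_prob _.
have FTm := data_sigma_measurable (leqnn T).
apply: le_measure.
- exact: mem_set (FTm _ (within_budget_data (leqnn T))).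
- apply: mem_set; apply: FTm; apply: (@measurableI _ (gen_sigmaType (data T)));
    [exact: performed_data|exact: budget_respected_data].
- move=> w /(within_budget_performed (leqnn T)).
  exact: performed_budget_respected.
Qed.

End vabo.

Theorem proposition1
  (R : realType) (d : measure_display) (Omega : measurableType d)
  (P : probability Omega R)
  (n N : nat) (lo hi : 'I_n -> R)
  (g : 'I_N -> Omega -> 'rV[R]_n -> R)   (* constraint functions *)
  (f : Omega -> 'rV[R]_n -> R)            (* objective *)
  (c : 'I_N -> R -> R)                    (* violation functions *)
  (B : 'I_N -> R)                         (* budgets *)
  (T : nat) (delta : R) (eps : nat -> R)
  (theta0 : seq 'rV[R]_n)                 (* initial set Theta_0 *)
  (theta : nat -> Omega -> 'rV[R]_n)      (* iterates theta_t, t >= 1 *)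
  (beta : 'I_N -> nat -> Omega -> R) :    (* weights beta_{i,t} *)
  let Theta := box lo hi in
  let F := data_sigma g f theta0 theta in
  let cbar := viol_cost c g in
  (* box *)
  (forall j, lo j <= hi j) ->
  (* Gaussian process model, mutually independent g_i *)
  (forall i, gaussian_process P Theta (g i)) ->
  mutually_independent_fields P Theta g ->
  (* well-posedness: evaluations (also at the random iterates) are measurable *)
  (forall x, measurable_fun setT (fun w => f w x)) ->
  (forall t i, measurable_fun setT (fun w => g i w (theta t w))) ->
  (forall t, measurable_fun setT (fun w => f w (theta t w))) ->
  (* violation functions: (A1) (A2) (A3), values in R_{>=0} *)
  (forall i s, 0 <= s -> 0 <= c i s) ->
  (forall i, c i 0 = 0) ->
  (forall i s1 s2, 0 <= s2 -> s2 < s1 -> c i s2 <= c i s1) ->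
  (forall i s, 0 < s -> c i x @[x --> s^'-] --> c i s) ->
  (* budgets, horizon, confidence *)
  (forall i, 0 <= B i) ->
  0 < delta < 1 ->
  (forall t, (1 <= t <= T)%N -> 0 < eps t < 1) ->
  delta = 1 - \prod_(1 <= t < T.+1) (1 - eps t) ->
  (* initial safe set *)
  theta0 != [::] ->
  (forall x, x \in theta0 -> Theta x) ->
  P [set w | forall i x, x \in theta0 -> g i w x <= 0] = 1%E ->
  (* the procedure *)
  (forall t, (1 <= t <= T)%N ->
     (forall w, Theta (theta t w)) /\
     (forall j, forall A : set R, measurable A ->
        F t.-1 ((fun w => theta t w ord0 j) @^-1` A)) /\
     (forall i, (forall w, 0 < beta i t w <= 1) /\
        forall A : set R, measurable A -> F t.-1 (beta i t @^-1` A)) /\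
     let Ev i := [set w | cbar i w (theta t w) <=
                          beta i t w * rem_budget c g B theta i t w] in
     exists h : 'I_N -> Omega -> R,
       (forall i, is_cond_prob P (F t.-1) (Ev i) (h i)) /\
       is_cond_prob P (F t.-1) (\bigcap_(i in [set: 'I_N]) Ev i)
                    (fun w => \prod_(i < N) h i w) /\
       (forall w, iteration_performed c g B theta t w ->
                  1 - eps t <= \prod_(i < N) h i w)) ->
  ((1 - delta)%:E <=
     P (iteration_performed c g B theta T `&`
        [set w | forall i, (\sum_(1 <= t < T.+1) cbar i w (theta t w) <= B i)%R]))%E.
Proof.
move=> Theta F cbar _ gp_g _ mf0 mg mf c_ge0 _ c_mono _ B0 _ eps01 -> _ Theta0 _.
move=> proc; rewrite opprB addrC subrK.
apply: (vabo_budget_prob c_ge0 c_mono _ _ (fun x _ => mf0 x) mg mf _ _ _ _ B0).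
- by move=> t i w /proc [_ [_ [/(_ i) [beta_t _] _]]].
- by move=> i x /Theta0; exact: gaussian_process_measurable (gp_g i).
- by move=> t j /proc [_ [theta_t _]]; apply/gen_sigma_measurableP; exact: theta_t.
- by move=> t i /proc [_ [_ [/(_ i) [_ beta_t] _]]]; apply/gen_sigma_measurableP.
- by move=> t /eps01 /andP[_ /ltW].
- move=> t /proc [_ [_ [_ [h [_ [hcond hbound]]]]]].
  exists (fun w => \prod_(i < N) h i w) => //.
  by rewrite (step_eventE g c B theta beta t).
Qed.
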